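(* Unambiguous NPWs are not Büchi-type with respect to DBW-realizable languages: there exists an unambiguous nondeterministic parity word automaton $\mathcal{A}=\langle\Sigma,Q,Q_0,\delta,\alpha\rangle$ such that $L(\mathcal{A})$ is recognized by some deterministic Büchi word automaton, yet there is no set $\alpha'\subseteq Q$ such that the Büchi automaton $\langle\Sigma,Q,Q_0,\delta,\alpha'\rangle$ recognizes $L(\mathcal{A})$.
   Context: An automaton $\langle\Sigma,Q,Q_0,\delta,\alpha\rangle$ has transition function $\delta:Q\times\Sigma\to2^Q$; a run on $w=a_1a_2\cdots$ is $r_0r_1\cdots$ with $r_0\in Q_0$, $r_{i+1}\in\delta(r_i,a_{i+1})$. Parity condition: $\alpha:Q\to\{0,\ldots,k\}$, a run is accepting iff the least priority of a state visited infinitely often is even. Büchi condition: $\alpha\subseteq Q$, a run is accepting iff it visits $\alpha$ infinitely often. An automaton is deterministic if $|Q_0|=1$ and $|\delta(q,a)|\le1$ for all $q,a$, and unambiguous if every accepted word has exactly one accepting run. NPW = nondeterministic parity word automaton; DBW = deterministic Büchi word automaton. *)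

From mathcomp Require Import all_boot.
Set Implicit Arguments. Unset Strict Implicit. Unset Printing Implicit Defensive.

(* Automata on infinite words over a finite alphabet Sigma with a finite
   state space Q.  An infinite word a_1 a_2 ... is a function w : nat -> Sigma
   with w i = a_{i+1}. *)
Record aut (Sigma Q : finType) := Aut {
  init  : {set Q};
  trans : Q -> Sigma -> {set Q}
}.

Definition word (Sigma : finType) := nat -> Sigma.

Definition is_run (Sigma Q : finType) (A : aut Sigma Q) (w : word Sigma)
  (r : nat -> Q) : Prop :=
  r 0 \in init A /\ forall i, r i.+1 \in trans A (r i) (w i).

Definition inf_often (Q : finType) (r : nat -> Q) (q : Q) : Prop :=
  forall n, exists m, n <= m /\ r m = q.

Definition parity_accepting (Q : finType) (alpha : Q -> nat) (r : nat -> Q) : Prop :=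
  exists p, ~~ odd p /\
    (exists q, inf_often r q /\ alpha q = p) /\
    (forall q, inf_often r q -> p <= alpha q).

Definition buchi_accepting (Q : finType) (alpha : {set Q}) (r : nat -> Q) : Prop :=
  forall n, exists m, n <= m /\ r m \in alpha.

Definition accepts_parity (Sigma Q : finType) (A : aut Sigma Q) (alpha : Q -> nat)
  (w : word Sigma) : Prop :=
  exists r, is_run A w r /\ parity_accepting alpha r.

Definition accepts_buchi (Sigma Q : finType) (A : aut Sigma Q) (alpha : {set Q})
  (w : word Sigma) : Prop :=
  exists r, is_run A w r /\ buchi_accepting alpha r.

Definition deterministic (Sigma Q : finType) (A : aut Sigma Q) : Prop :=
  #|init A| = 1 /\ forall q a, #|trans A q a| <= 1.

Definition unambiguous_parity (Sigma Q : finType) (A : aut Sigma Q) (alpha : Q -> nat) : Prop :=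
  forall w, accepts_parity A alpha w ->
    forall r1 r2, is_run A w r1 -> parity_accepting alpha r1 ->
                  is_run A w r2 -> parity_accepting alpha r2 -> r1 = r2.

From mathcomp Require Import all_boot zify.
From HB Require Import structures.
From Stdlib Require Import Classical FunctionalExtensionality Setoid.
Set Implicit Arguments. Unset Strict Implicit. Unset Printing Implicit Defensive.

(* The letters a and b are [true] and [false].  The automaton A is the
   disjoint union of two deterministic parts.  From [Start], which must read a,
   it checks that b occurs only finitely often: every block of b's passes
   through [Alarm], of odd priority 1, below the even priority 2 of [Calm].
   From [AfterA] it checks that the factor ba occurs infinitely often
   ([AfterBA] has priority 0).  These two languages are disjoint, so A is
   unambiguous, and their union is recognised by the deterministic Büchi
   automaton D, which branches on the first letter.  A Büchi condition on the
   graph of A accepting the same language must accept a^ω, hence contain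
   [Calm] or [AfterA]; but [Calm] is also visited infinitely often on ab^ω and
   [AfterA] on ba^ω, and neither word is in the language. *)


Section InfOften.
Variable Q : finType.
Implicit Type r : nat -> Q.

Lemma inf_often_addn r k q : inf_often (fun n => r (k + n)) q <-> inf_often r q.
Proof.
split=> H N.
  by have [m [Nm rm]] := H N; exists (k + m); split=> //; lia.
have [m [kNm rm]] := H (k + N); exists (m - k).
by rewrite subnKC; [split=> //; lia | lia].
Qed.

Lemma inf_often_eventually_const r N q :
  (forall m, N <= m -> r m = q) -> forall q', inf_often r q' <-> q' = q.
Proof.
move=> rq q'; split; first by move=> /(_ N) [m [/rq ->]].
by move=> -> n; exists (maxn N n); rewrite leq_maxr rq // leq_maxl.
Qed.

Lemma inf_often_range r (S : {set Q}) q :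
  (forall n, r n.+1 \in S) -> inf_often r q -> q \in S.
Proof. by move=> rS /(_ 1) [[|m] [//= _ <-]]. Qed.

Lemma not_inf_often r q :
  ~ inf_often r q -> exists N, forall m, N <= m -> r m != q.
Proof.
move=> rq; apply: NNPP => noN; apply: rq => N; apply: NNPP => noq.
by apply: noN; exists N => m Nm; apply/eqP => rmq; apply: noq; exists m.
Qed.

End InfOften.

Lemma eq_inf_often_shift (Q Q' : finType) (r : nat -> Q) (s : nat -> Q') j k q q' :
  (forall n, (r (j + n) == q) = (s (k + n) == q')) ->
  inf_often r q <-> inf_often s q'.
Proof.
move=> E; rewrite -(inf_often_addn r j) -(inf_often_addn s k).
by split=> H N; have [m [Nm /eqP]] := H N; exists m; split=> //; apply/eqP;
  rewrite ?E // -E.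
Qed.

Lemma inf_often_true (w : word bool) : ~ inf_often w false -> inf_often w true.
Proof.
move=> /not_inf_often [N wN].
have wT m : N <= m -> w m = true by move/wN; case: (w m).
by apply/(inf_often_eventually_const wT).
Qed.

Lemma inf_often_ba (w : word bool) :
  inf_often (fun n => ~~ w n && w n.+1) true <->
  inf_often w true /\ inf_often w false.
Proof.
split.
  by move=> H; split=> N; have [m [Nm /andP [/negbTE wm wm1]]] := H N;
    [exists m.+1; split=> //; lia | exists m].
move=> [wa wb] N; have [m [Nm wm]] := wb N.
have exa : exists k, (m <= k) && w k by have [k [mk wk]] := wa m; exists k; rewrite mk wk.
case: (ex_minnP exa) => k /andP [mk wk] kmin.
case: k mk wk kmin => [|k] mk wk kmin; first by move: mk wm wk; rewrite leqn0 => /eqP ->->.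
have mk' : m <= k.
  by move: mk; rewrite leq_eqVlt => /orP [/eqP mk | //]; rewrite mk wk in wm.
exists k; rewrite wk andbT; split; first lia.
by apply/negP => wk'; have := kmin k; rewrite mk' wk' ltnn => /(_ isT).
Qed.

Section Acceptance.
Variable Q : finType.
Implicit Type r : nat -> Q.

Lemma parity_accepting_const (alpha : Q -> nat) r N q :
  (forall m, N <= m -> r m = q) -> parity_accepting alpha r <-> ~~ odd (alpha q).
Proof.
move=> /inf_often_eventually_const rq; split.
  by move=> [p [p_even [[q' [/rq -> ->]] _]]].
move=> q_even; exists (alpha q); split=> //; split; first by exists q; rewrite rq.
by move=> q' /rq ->.
Qed.

Lemma parity_accepting_prio0 (alpha : Q -> nat) r q :
  inf_often r q -> alpha q = 0 -> parity_accepting alpha r.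
Proof. by move=> rq q0; exists 0; split=> //; split; first by exists q. Qed.

Lemma buchi_accepting_inf_often (S : {set Q}) r :
  buchi_accepting S r <-> inf_often (fun n => r n \in S) true.
Proof. by []. Qed.

Lemma buchi_accepting_const (S : {set Q}) r N q :
  (forall m, N <= m -> r m = q) -> buchi_accepting S r <-> q \in S.
Proof.
move=> rq; rewrite buchi_accepting_inf_often.
have /inf_often_eventually_const -> : forall m, N <= m -> (r m \in S) = (q \in S).
  by move=> m /rq ->.
by split=> [<- | ->].
Qed.

End Acceptance.

Section StepRuns.
Variables (Sigma Q : finType) (g : Q -> Sigma -> Q).

Fixpoint trace (q : Q) (w : word Sigma) (n : nat) : Q :=
  if n is n'.+1 then g (trace q w n') (w n') else q.

Definition follows (w : word Sigma) (r : nat -> Q) : Prop :=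
  forall n, r n.+1 = g (r n) (w n).

Lemma follows_trace q w : follows w (trace q w).
Proof. by []. Qed.

Lemma follows_traceE w r : follows w r -> r = trace (r 0) w.
Proof. by move=> wr; apply: functional_extensionality; elim=> //= n <-. Qed.

Lemma follows_stays (S : {set Q}) w r :
  (forall q a, q \in S -> g q a \in S) -> follows w r -> r 1 \in S ->
  forall n, r n.+1 \in S.
Proof. by move=> gS wr r1; elim=> // n IH; rewrite wr gS. Qed.

End StepRuns.

(* A and D share this state space and the step function below; A uses the
   states reachable from [Start] and [AfterA], D those reachable from [DStart]. *)
Inductive state :=
  Start | Calm | Alarm | AfterA | AfterB | AfterBA | DStart | LastA | LastB.

Definition state_code (q : state) : nat :=
  match q with
  | Start => 0 | Calm => 1 | Alarm => 2 | AfterA => 3 | AfterB => 4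
  | AfterBA => 5 | DStart => 6 | LastA => 7 | LastB => 8
  end.

Lemma state_code_lt q : state_code q < 9. Proof. by case: q. Qed.

Definition state_of_code (i : 'I_9) : state :=
  nth Start [:: Start; Calm; Alarm; AfterA; AfterB; AfterBA; DStart; LastA; LastB] i.

Lemma state_codeK : cancel (fun q => Ordinal (state_code_lt q)) state_of_code.
Proof. by case. Qed.

HB.instance Definition _ := Finite.copy state (can_type state_codeK).

Definition step (q : state) (a : bool) : state :=
  match q, a with
  | (Start | Calm | Alarm), true => Calm
  | (Start | Calm), false => Alarm
  | Alarm, false => Calm
  | (AfterA | AfterBA), true => AfterA
  | AfterB, true => AfterBA
  | (AfterA | AfterB | AfterBA | DStart), false => AfterB
  | (DStart | LastA | LastB), true => LastA
  | (LastA | LastB), false => LastB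
  end.

Definition A : aut bool state :=
  Aut [set Start; AfterA]
      (fun q a => if (q == Start) && ~~ a then set0 else [set step q a]).

Definition alpha (q : state) : nat :=
  match q with AfterBA => 0 | Calm => 2 | _ => 1 end.

Definition D : aut bool state := Aut [set DStart] (fun q a => [set step q a]).

Definition beta : {set state} := [set LastA; AfterBA].

Definition lang (w : word bool) : Prop :=
  inf_often w true /\ (w 0 = true \/ inf_often w false).

Definition part_fin_b : {set state} := [set Calm; Alarm].
Definition part_ba : {set state} := [set AfterA; AfterB; AfterBA].
Definition part_last : {set state} := [set LastA; LastB].

Lemma part_fin_b_closed q a : q \in part_fin_b -> step q a \in part_fin_b.
Proof. by rewrite /part_fin_b !inE; case: q; case: a. Qed.

Lemma part_ba_closed q a : q \in part_ba -> step q a \in part_ba.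
Proof. by rewrite /part_ba !inE; case: q; case: a. Qed.

Lemma part_last_closed q a : q \in part_last -> step q a \in part_last.
Proof. by rewrite /part_last !inE; case: q; case: a. Qed.

Lemma step_part_last q a : q \in part_last -> step q a = if a then LastA else LastB.
Proof. by rewrite /part_last !inE; case: q; case: a. Qed.

Lemma step_part_fin_b_true q : q \in part_fin_b -> step q true = Calm.
Proof. by rewrite /part_fin_b !inE; case: q. Qed.

Lemma step_part_fin_b_false q : q \in part_fin_b -> q = Alarm \/ step q false = Alarm.
Proof. by rewrite /part_fin_b !inE; case: q; auto. Qed.

Lemma step_step_part_ba q a b :
  q \in part_ba -> (step (step q a) b == AfterBA) = ~~ a && b.
Proof. by rewrite /part_ba !inE; case: q; case: a; case: b. Qed.

Lemma step_neq_Start q a : step q a != Start.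
Proof. by case: q; case: a. Qed.

Lemma accepting_part_fin_b w r : follows step w r -> r 1 \in part_fin_b ->
  parity_accepting alpha r <-> ~ inf_often w false.
Proof.
move=> wr r1; have inC := follows_stays part_fin_b_closed wr r1; split.
- move=> [p [p_even [[q [rq qp]] pmin]] wb].
  have q_Calm : q = Calm.
    move: (inf_often_range inC rq) p_even; rewrite -qp /part_fin_b !inE.
    by case/orP=> /eqP ->.
  have rAlarm : inf_often r Alarm.
    move=> N; have [[|m] [Nm wm]] := wb N.+1 => //.
    have [rm | rm1] := step_part_fin_b_false (inC m); first by exists m.+1; split=> //; lia.
    by exists m.+2; rewrite wr wm rm1; split=> //; lia.
  by have := pmin _ rAlarm; rewrite -qp q_Calm.
- move=> /not_inf_often [N wN].
  have rCalm m : N.+2 <= m -> r m = Calm.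
    case: m => [|[|m]] // Nm; have : w m.+1 != false by apply: wN; apply: ltnW.
    by rewrite wr; case: (w m.+1) => // _; rewrite step_part_fin_b_true.
  by apply/(parity_accepting_const alpha rCalm).
Qed.

Lemma inf_often_AfterBA w r : follows step w r -> r 1 \in part_ba ->
  inf_often r AfterBA <-> inf_often w true /\ inf_often w false.
Proof.
move=> wr r1; have inC := follows_stays part_ba_closed wr r1.
rewrite -inf_often_ba; apply: (eq_inf_often_shift (j := 3) (k := 1)) => n.
by rewrite !addSn !add0n wr [r n.+2]wr step_step_part_ba ?eqb_id.
Qed.

Lemma accepting_part_ba w r : follows step w r -> r 1 \in part_ba ->
  parity_accepting alpha r <-> inf_often w true /\ inf_often w false.
Proof.
move=> wr r1; have inC := follows_stays part_ba_closed wr r1.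
rewrite -(inf_often_AfterBA wr r1); split; last by move/parity_accepting_prio0; apply.
move=> [p [p_even [[q [rq qp]] _]]].
by move: (inf_often_range inC rq) p_even; rewrite -qp /part_ba !inE; case: q rq {qp}.
Qed.

Lemma buchi_part_last w r : follows step w r -> r 1 \in part_last ->
  buchi_accepting beta r <-> inf_often w true.
Proof.
move=> wr r1; have inC := follows_stays part_last_closed wr r1.
rewrite buchi_accepting_inf_often; apply: (eq_inf_often_shift (j := 2) (k := 1)) => n.
by rewrite !addSn !add0n wr (step_part_last _ (inC n)) /beta !inE; case: (w n.+1).
Qed.

Lemma buchi_part_ba w r : follows step w r -> r 1 \in part_ba ->
  buchi_accepting beta r <-> inf_often w true /\ inf_often w false.
Proof.
move=> wr r1; have inC := follows_stays part_ba_closed wr r1.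
rewrite buchi_accepting_inf_often -(inf_often_AfterBA wr r1).
apply: (eq_inf_often_shift (j := 1) (k := 1)) => n; rewrite /= /beta !inE.
by move: (inC n); rewrite /part_ba !inE; case: (r n.+1).
Qed.

Lemma is_run_AP w r : is_run A w r <->
  follows step w r /\ (r 0 = Start /\ w 0 = true \/ r 0 = AfterA).
Proof.
split.
- move=> [r0 rS]; have wr : follows step w r.
    by move=> n; move: (rS n) => /=; case: ifP => _; [rewrite inE | move/set1P].
  split=> //; move: r0; rewrite /= !inE => /orP [/eqP r0 | /eqP r0]; last by right.
  by left; split=> //; move: (rS 0); rewrite /= r0; case: (w 0); rewrite ?inE.
- move=> [wr r0]; split; first by rewrite /= !inE; case: r0 => [[->] | ->].
  move=> n /=; case: ifP => [/andP [/eqP rn wn] | _]; last by rewrite wr inE.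
  exfalso; case: n rn wn => [|n] rn wn.
    by case: r0 => [[_ w0] | r0]; [rewrite w0 in wn | rewrite r0 in rn].
  by move: (step_neq_Start (r n) (w n)); rewrite -wr rn.
Qed.

Lemma accepting_run_A w r : is_run A w r -> parity_accepting alpha r ->
  r 0 = Start /\ ~ inf_often w false \/
  r 0 = AfterA /\ inf_often w true /\ inf_often w false.
Proof.
move=> /is_run_AP [wr [[r0 w0] | r0]] acc.
- have r1 : r 1 \in part_fin_b by rewrite wr r0 w0 /part_fin_b !inE.
  by left; split=> //; apply/(accepting_part_fin_b wr r1).
- have r1 : r 1 \in part_ba by rewrite wr r0 /part_ba !inE; case: (w 0).
  by right; split=> //; apply/(accepting_part_ba wr r1).
Qed.

Lemma accepts_A w : accepts_parity A alpha w <-> lang w.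
Proof.
split.
- move=> [r [rA acc]].
  case: (accepting_run_A rA acc) => [[r0 wb] | [_ [wa wb]]]; last by split; [|right].
  split; first exact: inf_often_true.
  by left; have /is_run_AP [_ [[_ w0] | r0']] := rA; last rewrite r0 in r0'.
- move=> [wa w0b]; have [wb | wb] := classic (inf_often w false).
  + have wr := follows_trace step AfterA w.
    have r1 : trace step AfterA w 1 \in part_ba by rewrite /= /part_ba !inE; case: (w 0).
    exists (trace step AfterA w); split; first by apply/is_run_AP; split=> //; right.
    exact/(accepting_part_ba wr r1).
  + have w0 : w 0 = true by case: w0b.
    have wr := follows_trace step Start w.
    have r1 : trace step Start w 1 \in part_fin_b by rewrite /= w0 /part_fin_b !inE.
    exists (trace step Start w); split; first by apply/is_run_AP; split=> //; left.
    exact/(accepting_part_fin_b wr r1).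
Qed.

Lemma A_unambiguous : unambiguous_parity A alpha.
Proof.
move=> w _ r1 r2 run1 acc1 run2 acc2.
have /is_run_AP [wr1 _] := run1; have /is_run_AP [wr2 _] := run2.
rewrite (follows_traceE wr1) (follows_traceE wr2).
by case: (accepting_run_A run1 acc1) (accepting_run_A run2 acc2)
  => [[-> ?] | [-> [_ ?]]] [[-> ?] | [-> [_ ?]]].
Qed.

Lemma D_deterministic : deterministic D.
Proof. by split=> [|q a]; rewrite /= cards1. Qed.

Lemma accepts_buchi_D w :
  accepts_buchi D beta w <-> buchi_accepting beta (trace step DStart w).
Proof.
split; last first.
  by move=> acc; exists (trace step DStart w); split=> //; split=> [|n]; rewrite /= inE.
move=> [r [[r0 rS] acc]].
have wr : follows step w r by move=> n; apply/set1P/rS.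
by move/set1P: r0 => r0; rewrite -r0 -(follows_traceE wr).
Qed.

Lemma accepts_D w : accepts_buchi D beta w <-> lang w.
Proof.
rewrite accepts_buchi_D; have wr := follows_trace step DStart w.
rewrite /lang; case w0: (w 0).
- rewrite (buchi_part_last wr); last by rewrite /= w0 /part_last !inE.
  by split=> [wa | []] //; split; last left.
- rewrite (buchi_part_ba wr); last by rewrite /= w0 /part_ba !inE.
  by split=> [[wa wb] | [wa [//|wb]]]; split=> //; right.
Qed.

Definition a_omega : word bool := fun=> true.
Definition ab_omega : word bool := fun n => n == 0.
Definition ba_omega : word bool := fun n => n != 0.

Lemma accepts_buchi_A_a_omega (alpha' : {set state}) :
  accepts_buchi A alpha' a_omega -> Calm \in alpha' \/ AfterA \in alpha'.
Proof.
move=> [r [/is_run_AP [wr [[r0 _] | r0]] acc]].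
- left; have rCalm m : 1 <= m -> r m = Calm.
    by case: m => // m _; elim: m => [|m IH]; rewrite wr ?r0 ?IH.
  exact/(buchi_accepting_const alpha' rCalm).
- right; have rAfterA m : 0 <= m -> r m = AfterA.
    by move=> _; elim: m => [|m IH]; rewrite ?wr ?IH.
  exact/(buchi_accepting_const alpha' rAfterA).
Qed.

Lemma accepts_buchi_A_ab_omega (alpha' : {set state}) :
  Calm \in alpha' -> accepts_buchi A alpha' ab_omega.
Proof.
move=> Calm_in; exists (trace step Start ab_omega).
split; first by apply/is_run_AP; split=> //; left.
have wr := follows_trace step Start ab_omega.
have odd_Calm k : trace step Start ab_omega k.*2.+1 = Calm.
  by elim: k => // k IH; rewrite doubleS wr [trace _ _ _ k.*2.+2]wr IH.
by move=> n; exists n.*2.+1; rewrite odd_Calm; split=> //; rewrite -addnn; lia.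
Qed.

Lemma accepts_buchi_A_ba_omega (alpha' : {set state}) :
  AfterA \in alpha' -> accepts_buchi A alpha' ba_omega.
Proof.
move=> AfterA_in; exists (trace step AfterA ba_omega).
split; first by apply/is_run_AP; split=> //; right.
have rAfterA m : 3 <= m -> trace step AfterA ba_omega m = AfterA.
  elim: m => // m IH; rewrite leq_eqVlt => /orP [/eqP <- // | m3].
  by rewrite /= IH //; case: m m3 {IH}.
exact/(buchi_accepting_const alpha' rAfterA).
Qed.

Lemma A_not_buchi_type (alpha' : {set state}) :
  ~ (forall w, accepts_buchi A alpha' w <-> lang w).
Proof.
move=> same.
have lang_a_omega : lang a_omega by split; [move=> n; exists n | left].
case: (accepts_buchi_A_a_omega (proj2 (same _) lang_a_omega))
  => [/accepts_buchi_A_ab_omega | /accepts_buchi_A_ba_omega] /same.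
- by case=> /(_ 1) [[|m] [//]].
- by case=> _ [//|/(_ 1) [[|m] [//]]].
Qed.

Theorem proposition7 :
  exists (Sigma Q : finType) (A : aut Sigma Q) (alpha : Q -> nat),
    unambiguous_parity A alpha /\
    (exists (Q' : finType) (D : aut Sigma Q') (beta : {set Q'}),
        deterministic D /\
        forall w, accepts_buchi D beta w <-> accepts_parity A alpha w) /\
    ~ (exists alpha' : {set Q},
        forall w, accepts_buchi A alpha' w <-> accepts_parity A alpha w).
Proof.
exists bool, state, A, alpha; split; first exact: A_unambiguous.
split.
  exists state, D, beta; split; first exact: D_deterministic.
  by move=> w; rewrite accepts_D accepts_A.
move=> [alpha' same]; apply: (@A_not_buchi_type alpha') => w.
by rewrite same accepts_A.
Qed.
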